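(* Let $F$ be a countable subfield of $\mathbb{R}$, and let $\varphi=\exists x_1\cdots\exists x_n\,\psi(x_1,\ldots,x_n)$ where $\psi$ is quantifier-free in the language $\{0,1,+,\times,<\}$. Then there exist $a_1,\ldots,a_n\in F$ such that $\psi(a_1,\ldots,a_n)$ holds in $\mathbb{R}$ if and only if for every model $\mathcal M$ of $T[F]^*$ there exist $b_1,\ldots,b_n$ in $\mathcal M$ with $\mathcal M\models\psi(b_1,\ldots,b_n)$ and $\mathcal M\models b_i\times(1+b_i)=b_i+(b_i\times b_i)$ for each $i$.
   Context: $T[F]^*$ is the theory in the language $\{0,1,+,\times,<\}\cup\{c_a: a\in F\}$ ($c_a$ constant symbols) with axioms: (1) $0,+,<$ form an ordered abelian group; (2) the positive elements form a divisible ordered abelian group under $\times$ with identity $1$ and order $<$; (3a) $c_{a+b}=c_a+c_b$, (3b) $c_{ab}=c_a\times c_b$, for $a,b\in F$; (3c) $0<c_a$ for $a\in F$, $a>0$; (4a) $c_{a+b}\times x=(c_a\times x)+(c_b\times x)$ and (4b) $c_a\times(x+y)=(c_a\times x)+(c_a\times y)$, for all $a,b\in F$ and all $x,y$. *)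

From Stdlib Require Import Reals.
From Stdlib Require Fin.
Open Scope R_scope.

Record is_subfield (F : R -> Prop) : Prop := {
  sf_0 : F 0;
  sf_1 : F 1;
  sf_add : forall x y, F x -> F y -> F (x + y);
  sf_opp : forall x, F x -> F (- x);
  sf_mul : forall x y, F x -> F y -> F (x * y);
  sf_inv : forall x, F x -> x <> 0 -> F (/ x)
}.

Definition countable_set (F : R -> Prop) : Prop :=
  exists f : {x : R | F x} -> nat, forall u v, f u = f v -> u = v.

Inductive term (n : nat) : Type :=
| Tvar : Fin.t n -> term n
| Tzero : term n
| Tone : term n
| Tadd : term n -> term n -> term n
| Tmul : term n -> term n -> term n.

Inductive qf_formula (n : nat) : Type :=
| Feq : term n -> term n -> qf_formula n
| Flt : term n -> term n -> qf_formula n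
| Fnot : qf_formula n -> qf_formula n
| Fand : qf_formula n -> qf_formula n -> qf_formula n
| For : qf_formula n -> qf_formula n -> qf_formula n.

Arguments Tvar {n}. Arguments Tzero {n}. Arguments Tone {n}.
Arguments Tadd {n}. Arguments Tmul {n}.
Arguments Feq {n}. Arguments Flt {n}. Arguments Fnot {n}.
Arguments Fand {n}. Arguments For {n}.

(** Structures for the language {0,1,+,x,<} U {c_a : a in F}.
    The constants are given by a map [cst : R -> car]; only its values on F
    matter (c_a for a in F). *)
Record LStruct : Type := {
  car : Type;
  zeroM : car;
  oneM : car;
  addM : car -> car -> car;
  mulM : car -> car -> car;
  ltM : car -> car -> Prop;
  cst : R -> car
}.

Fixpoint eval_term {n} (M : LStruct) (v : Fin.t n -> car M) (t : term n) : car M :=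
  match t with
  | Tvar i => v i
  | Tzero => zeroM M
  | Tone => oneM M
  | Tadd t1 t2 => addM M (eval_term M v t1) (eval_term M v t2)
  | Tmul t1 t2 => mulM M (eval_term M v t1) (eval_term M v t2)
  end.

Fixpoint sat {n} (M : LStruct) (v : Fin.t n -> car M) (f : qf_formula n) : Prop :=
  match f with
  | Feq t1 t2 => eval_term M v t1 = eval_term M v t2
  | Flt t1 t2 => ltM M (eval_term M v t1) (eval_term M v t2)
  | Fnot g => ~ sat M v g
  | Fand g h => sat M v g /\ sat M v h
  | For g h => sat M v g \/ sat M v h
  end.

Definition Rstruct : LStruct :=
  {| car := R; zeroM := 0; oneM := 1; addM := Rplus; mulM := Rmult;
     ltM := Rlt; cst := fun a => a |}.

Fixpoint powM (M : LStruct) (x : car M) (k : nat) : car M :=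
  match k with
  | O => x
  | S k' => mulM M x (powM M x k')
  end.
(* powM M x k = x^(k+1) *)

Record model_TF (F : R -> Prop) (M : LStruct) : Prop := {
  (* (1) 0, +, < form an ordered abelian group *)
  ax_add_assoc : forall x y z, addM M x (addM M y z) = addM M (addM M x y) z;
  ax_add_comm : forall x y, addM M x y = addM M y x;
  ax_add_0 : forall x, addM M (zeroM M) x = x;
  ax_add_inv : forall x, exists y, addM M x y = zeroM M;
  ax_lt_irrefl : forall x, ~ ltM M x x;
  ax_lt_trans : forall x y z, ltM M x y -> ltM M y z -> ltM M x z;
  ax_lt_total : forall x y, ltM M x y \/ x = y \/ ltM M y x;
  ax_lt_add : forall x y z, ltM M x y -> ltM M (addM M x z) (addM M y z);
  (* (2) positive elements form a divisible ordered abelian group under x,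
     with identity 1 and order < *)
  ax_pos_1 : ltM M (zeroM M) (oneM M);
  ax_pos_mul_closed : forall x y, ltM M (zeroM M) x -> ltM M (zeroM M) y ->
      ltM M (zeroM M) (mulM M x y);
  ax_pos_mul_assoc : forall x y z, ltM M (zeroM M) x -> ltM M (zeroM M) y ->
      ltM M (zeroM M) z -> mulM M x (mulM M y z) = mulM M (mulM M x y) z;
  ax_pos_mul_comm : forall x y, ltM M (zeroM M) x -> ltM M (zeroM M) y ->
      mulM M x y = mulM M y x;
  ax_pos_mul_1 : forall x, ltM M (zeroM M) x -> mulM M (oneM M) x = x;
  ax_pos_mul_inv : forall x, ltM M (zeroM M) x ->
      exists y, ltM M (zeroM M) y /\ mulM M x y = oneM M;
  ax_pos_lt_mul : forall x y z, ltM M (zeroM M) x -> ltM M (zeroM M) y ->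
      ltM M (zeroM M) z -> ltM M x y -> ltM M (mulM M x z) (mulM M y z);
  ax_pos_divisible : forall (k : nat) x, ltM M (zeroM M) x ->
      exists y, ltM M (zeroM M) y /\ powM M y k = x;
  ax_cst_add : forall a b, F a -> F b -> cst M (a + b) = addM M (cst M a) (cst M b);
  ax_cst_mul : forall a b, F a -> F b -> cst M (a * b) = mulM M (cst M a) (cst M b);
  ax_cst_pos : forall a, F a -> 0 < a -> ltM M (zeroM M) (cst M a);
  (* (4) distributivity with constants *)
  ax_cst_distr_l : forall a b x, F a -> F b ->
      mulM M (cst M (a + b)) x = addM M (mulM M (cst M a) x) (mulM M (cst M b) x);
  ax_cst_distr_r : forall a x y, F a ->
      mulM M (cst M a) (addM M x y) = addM M (mulM M (cst M a) x) (mulM M (cst M a) y)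
}.

(* The constants [c_a] of any model of T[F]^* form an ordered copy of [F] closed under
   the operations, and [c_a (1 + c_a) = c_a + c_a c_a] is an instance of axiom (4b), so
   solutions in [F] transfer to every model.

   Conversely it suffices to build one model in which every solution of
   [x (1 + x) = x + x x] is a constant [c_a] with [a] in [F]. Its elements are the
   finitely supported [f : R -> R], read as formal sums of [f q * t^q], with pointwise
   addition and the order given by the sign of the leading coefficient. A positive
   element [c t^d (1 + y)] is sent by an order isomorphism to the ordered divisible group
   [R x R x tails], and the product of positive elements is transported from addition
   there, while products by constants are plain scalings. The isomorphism is twisted on
   purpose: degrees pass through the signed square, tails through an invertible cubic
   map, and a flag records whether the leading coefficient lies in [F]. Comparing
   coefficients in [x (1 + x) = x + x x] then forces degree 0, a leading coefficient in
   [F] and a zero tail. *)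

From Stdlib Require Import Reals Lra List.
From Stdlib Require Import Classical ClassicalEpsilon FunctionalExtensionality ProofIrrelevance.
From Stdlib Require Fin.
Open Scope R_scope.

(** * Constants in a model of T[F]^* *)

Definition one_distrib (M : LStruct) (x : car M) : Prop :=
  mulM M x (addM M (oneM M) x) = addM M x (mulM M x x).

Section ModelFacts.

Variables (F : R -> Prop) (M : LStruct).
Hypotheses (HF : is_subfield F) (HM : model_TF F M).

Lemma addM_cancel_r (x y z : car M) : addM M x z = addM M y z -> x = y.
Proof.
  intro E. destruct (ax_add_inv F M HM z) as [w Hw].
  assert (K : forall u, addM M (addM M u z) w = u).
  { intro u. rewrite <- (ax_add_assoc F M HM), Hw, (ax_add_comm F M HM), (ax_add_0 F M HM).
    reflexivity. }
  rewrite <- (K x), <- (K y), E. reflexivity.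
Qed.

Lemma cst_0 : cst M 0 = zeroM M.
Proof.
  apply (addM_cancel_r _ _ (cst M 0)).
  rewrite <- (ax_cst_add F M HM) by apply (sf_0 F HF).
  rewrite Rplus_0_r, (ax_add_0 F M HM). reflexivity.
Qed.

Lemma cst_1 : cst M 1 = oneM M.
Proof.
  pose proof (sf_1 F HF) as F1.
  assert (P1 : ltM M (zeroM M) (cst M 1)) by (apply (ax_cst_pos F M HM); [exact F1 | lra]).
  pose proof (ax_pos_1 F M HM) as P0.
  destruct (ax_pos_mul_inv F M HM _ P1) as [w [Pw Hw]].
  assert (E : mulM M (mulM M (cst M 1) (cst M 1)) w = mulM M (cst M 1) w).
  { rewrite <- (ax_cst_mul F M HM) by exact F1. rewrite Rmult_1_r. reflexivity. }
  rewrite <- (ax_pos_mul_assoc F M HM), Hw, (ax_pos_mul_comm F M HM), (ax_pos_mul_1 F M HM) in E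
    by assumption.
  exact E.
Qed.

Lemma cst_lt (a b : R) : F a -> F b -> a < b -> ltM M (cst M a) (cst M b).
Proof.
  intros Fa Fb ab.
  assert (Fd : F (b + - a)) by (apply (sf_add F HF), (sf_opp F HF); assumption).
  replace b with ((b + - a) + a) by ring. rewrite (ax_cst_add F M HM) by assumption.
  pose proof (ax_lt_add F M HM _ _ (cst M a) (ax_cst_pos F M HM _ Fd ltac:(lra))) as L.
  rewrite (ax_add_0 F M HM) in L. exact L.
Qed.

Lemma cst_lt_iff (a b : R) : F a -> F b -> (ltM M (cst M a) (cst M b) <-> a < b).
Proof.
  intros Fa Fb. split; [| apply cst_lt; assumption].
  intro L. destruct (Rtotal_order a b) as [ab | [ab | ab]]; [exact ab | |]; exfalso.
  - subst. exact (ax_lt_irrefl F M HM _ L).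
  - exact (ax_lt_irrefl F M HM _ (ax_lt_trans F M HM _ _ _ L (cst_lt b a Fb Fa ab))).
Qed.

Lemma cst_inj (a b : R) : F a -> F b -> cst M a = cst M b -> a = b.
Proof.
  intros Fa Fb E. destruct (Rtotal_order a b) as [ab | [ab | ab]]; [| exact ab |]; exfalso.
  - pose proof (cst_lt a b Fa Fb ab) as L. rewrite E in L. exact (ax_lt_irrefl F M HM _ L).
  - pose proof (cst_lt b a Fb Fa ab) as L. rewrite E in L. exact (ax_lt_irrefl F M HM _ L).
Qed.

Lemma one_distrib_cst (a : R) : F a -> one_distrib M (cst M a).
Proof.
  intro Fa. unfold one_distrib.
  rewrite (ax_cst_distr_r F M HM), <- cst_1, <- (ax_cst_mul F M HM), Rmult_1_r
    by (exact Fa || exact (sf_1 F HF)).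
  reflexivity.
Qed.

Section Valuation.

Variables (n : nat) (a : Fin.t n -> R).
Hypothesis Fa : forall i, F (a i).

Lemma F_eval_term (t : term n) : F (@eval_term n Rstruct a t).
Proof.
  induction t; simpl.
  - apply Fa.
  - apply (sf_0 F HF).
  - apply (sf_1 F HF).
  - apply (sf_add F HF); assumption.
  - apply (sf_mul F HF); assumption.
Qed.

Lemma eval_term_cst (t : term n) :
  eval_term M (fun i => cst M (a i)) t = cst M (@eval_term n Rstruct a t).
Proof.
  induction t as [i | | | t1 IH1 t2 IH2 | t1 IH1 t2 IH2]; simpl.
  - reflexivity.
  - symmetry. apply cst_0.
  - symmetry. apply cst_1.
  - rewrite IH1, IH2, (ax_cst_add F M HM) by apply F_eval_term. reflexivity.
  - rewrite IH1, IH2, (ax_cst_mul F M HM) by apply F_eval_term. reflexivity.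
Qed.

Lemma sat_cst (f : qf_formula n) : sat M (fun i => cst M (a i)) f <-> sat Rstruct a f.
Proof.
  induction f as [t1 t2 | t1 t2 | g IH | g IHg h IHh | g IHg h IHh]; simpl; try tauto.
  - rewrite !eval_term_cst. split; [apply cst_inj; apply F_eval_term | intros ->; reflexivity].
  - rewrite !eval_term_cst. apply cst_lt_iff; apply F_eval_term.
Qed.

End Valuation.

End ModelFacts.

(** * Finitely supported functions as formal sums *)

Definition delta (a q : R) : R := if Req_dec_T q a then 1 else 0.

Lemma delta_same (a : R) : delta a a = 1.
Proof. unfold delta. destruct (Req_dec_T a a); [reflexivity | congruence]. Qed.

Lemma delta_other (a q : R) : q <> a -> delta a q = 0.
Proof. intro qa. unfold delta. destruct (Req_dec_T q a); [congruence | reflexivity]. Qed.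

Lemma delta_sub (a d q : R) : delta a (q - d) = delta (a + d) q.
Proof.
  destruct (Req_dec_T q (a + d)) as [-> | qa].
  - replace (a + d - d) with a by ring. rewrite !delta_same. reflexivity.
  - rewrite !delta_other by lra. reflexivity.
Qed.

Definition fin_supp (f : R -> R) : Prop := exists l : list R, forall q, f q <> 0 -> In q l.

Definition vanish_above (e : R) (f : R -> R) : Prop := forall q, e < q -> f q = 0.

Definition neg_supp (f : R -> R) : Prop := forall q, 0 <= q -> f q = 0.

Definition is_deg (f : R -> R) (e : R) : Prop := f e <> 0 /\ vanish_above e f.

Definition lead_pos (f : R -> R) : Prop := exists e, 0 < f e /\ vanish_above e f.

Definition deg (f : R -> R) : R := epsilon (inhabits 0) (is_deg f).

Definition lead_coef (f : R -> R) : R := f (deg f).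

Definition lead_tail (f : R -> R) (q : R) : R :=
  if Rlt_dec q 0 then f (q + deg f) / lead_coef f else 0.

(* [c t^d (1 + y)], with [y] meant to be [neg_supp]. *)
Definition lead_form (d c : R) (y : R -> R) (q : R) : R := c * (delta d q + y (q - d)).

Lemma is_deg_unique (f : R -> R) (e e' : R) : is_deg f e -> is_deg f e' -> e = e'.
Proof.
  intros [fe above] [fe' above']. destruct (Rtotal_order e e') as [ee' | [ee' | ee']].
  - exfalso. exact (fe' (above e' ee')).
  - exact ee'.
  - exfalso. exact (fe (above' e ee')).
Qed.

Lemma deg_spec (f : R -> R) (e : R) : is_deg f e -> deg f = e.
Proof.
  intro fe. apply (is_deg_unique f); [| exact fe].
  unfold deg. apply epsilon_spec. exists e. exact fe.
Qed.

Lemma lead_pos_deg (f : R -> R) : lead_pos f -> is_deg f (deg f) /\ 0 < lead_coef f.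
Proof.
  intros [e [fe above]]. assert (D : is_deg f e) by (split; [lra | exact above]).
  unfold lead_coef. rewrite (deg_spec f e D). split; [exact D | exact fe].
Qed.

Lemma neg_supp_lead_tail (f : R -> R) : neg_supp (lead_tail f).
Proof. intros q q0. unfold lead_tail. destruct (Rlt_dec q 0); [lra | reflexivity]. Qed.

Lemma lead_form_decomp (f : R -> R) :
  lead_pos f -> lead_form (deg f) (lead_coef f) (lead_tail f) = f.
Proof.
  intro P. destruct (lead_pos_deg f P) as [[_ above] c0].
  apply functional_extensionality. intro q. unfold lead_form, lead_tail.
  destruct (Rtotal_order q (deg f)) as [qd | [qd | qd]].
  - rewrite delta_other by lra. destruct (Rlt_dec (q - deg f) 0); [| lra].
    replace (q - deg f + deg f) with q by ring. field. lra.
  - subst q. rewrite delta_same. destruct (Rlt_dec (deg f - deg f) 0); [lra |].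
    unfold lead_coef. ring.
  - rewrite (above q), delta_other by lra. destruct (Rlt_dec (q - deg f) 0); [lra | ring].
Qed.

Section LeadForm.

Variables (d c : R) (y : R -> R).
Hypothesis Ny : neg_supp y.

Lemma lead_form_at_deg : lead_form d c y d = c.
Proof. unfold lead_form. rewrite delta_same, Rminus_diag, (Ny 0) by lra. ring. Qed.

Lemma vanish_above_lead_form : vanish_above d (lead_form d c y).
Proof. intros q dq. unfold lead_form. rewrite delta_other, Ny by lra. ring. Qed.

Hypothesis c0 : c <> 0.

Lemma is_deg_lead_form : is_deg (lead_form d c y) d.
Proof. split; [rewrite lead_form_at_deg; exact c0 | apply vanish_above_lead_form]. Qed.

Lemma deg_lead_form : deg (lead_form d c y) = d.
Proof. apply deg_spec, is_deg_lead_form. Qed.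

Lemma lead_coef_lead_form : lead_coef (lead_form d c y) = c.
Proof. unfold lead_coef. rewrite deg_lead_form. apply lead_form_at_deg. Qed.

Lemma lead_tail_lead_form : lead_tail (lead_form d c y) = y.
Proof.
  apply functional_extensionality. intro q. unfold lead_tail.
  rewrite lead_coef_lead_form, deg_lead_form. destruct (Rlt_dec q 0).
  - unfold lead_form. rewrite delta_other by lra. replace (q + d - d) with q by ring.
    field. exact c0.
  - rewrite Ny by lra. reflexivity.
Qed.

End LeadForm.

Lemma lead_pos_lead_form (d c : R) (y : R -> R) :
  0 < c -> neg_supp y -> lead_pos (lead_form d c y).
Proof.
  intros c0 Ny. exists d. rewrite lead_form_at_deg by exact Ny.
  split; [exact c0 | apply vanish_above_lead_form, Ny].
Qed.

Lemma lead_pos_ext (f g : R -> R) : (forall q, f q = g q) -> lead_pos f -> lead_pos g.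
Proof.
  intros E [e [fe above]]. exists e. rewrite <- E. split; [exact fe |].
  intros q eq. rewrite <- E. apply above, eq.
Qed.

Lemma lead_pos_add (f g : R -> R) : lead_pos f -> lead_pos g -> lead_pos (fun q => f q + g q).
Proof.
  intros [a [fa Af]] [b [gb Ag]]. destruct (Rlt_le_dec a b) as [ab | ba].
  - exists b. rewrite (Af b ab). split; [lra |]. intros q bq. rewrite Af, Ag by lra. ring.
  - exists a. split.
    + destruct (Rle_lt_or_eq_dec b a ba) as [ba' | ->]; [rewrite (Ag a ba') |]; lra.
    + intros q aq. rewrite Af, Ag by lra. ring.
Qed.

Lemma not_lead_pos_zero : ~ lead_pos (fun _ => 0).
Proof. intros [e [fe _]]. lra. Qed.

Lemma lead_pos_scale_shift (c d : R) (f : R -> R) :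
  0 < c -> lead_pos f -> lead_pos (fun q => c * f (q - d)).
Proof.
  intros c0 [e [fe above]]. exists (e + d). split.
  - replace (e + d - d) with e by ring. nra.
  - intros q eq. rewrite above by lra. ring.
Qed.

Lemma lead_pos_cst (a : R) : 0 < a -> lead_pos (fun q => a * delta 0 q).
Proof.
  intro a0. exists 0. rewrite delta_same. split; [lra |].
  intros q q0. rewrite delta_other by lra. ring.
Qed.

Lemma lead_pos_nonneg_at (f : R -> R) (e : R) : lead_pos f -> vanish_above e f -> 0 <= f e.
Proof.
  intros [e' [fe' A']] Af. destruct (Rtotal_order e e') as [ee' | [<- | ee']].
  - rewrite (Af e' ee') in fe'. lra.
  - lra.
  - rewrite (A' e ee'). lra.
Qed.

Lemma lead_pos_sub_at (f g : R -> R) (e : R) :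
  f e < g e -> vanish_above e f -> vanish_above e g -> lead_pos (fun q => g q - f q).
Proof.
  intros fg Af Ag. exists e. split; [lra |]. intros q eq. rewrite Af, Ag by exact eq. ring.
Qed.

Lemma lead_pos_lead_form_diff (d c : R) (y y' : R -> R) : 0 < c ->
  lead_pos (fun q => lead_form d c y' q - lead_form d c y q) <-> lead_pos (fun q => y' q - y q).
Proof.
  intro c0. unfold lead_form. split; intro P.
  - apply (lead_pos_ext (fun q => / c * (c * (delta d (q - - d) + y' (q - - d - d))
                                        - c * (delta d (q - - d) + y (q - - d - d))))).
    + intro q. replace (q - - d - d) with q by ring. field. lra.
    + apply lead_pos_scale_shift with (f := fun q => c * (delta d q + y' (q - d))
                                                   - c * (delta d q + y (q - d))).
      * apply Rinv_0_lt_compat, c0.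
      * exact P.
  - apply (lead_pos_ext (fun q => c * (y' (q - d) - y (q - d)))); [intro q; ring |].
    apply lead_pos_scale_shift with (f := fun q => y' q - y q); assumption.
Qed.

Lemma fin_supp_weaken (f g : R -> R) :
  (forall q, g q <> 0 -> f q <> 0) -> fin_supp f -> fin_supp g.
Proof. intros fg [l supp]. exists l. intros q gq. apply supp, fg, gq. Qed.

Lemma fin_supp_zero : fin_supp (fun _ => 0).
Proof. exists nil. intros q q0. congruence. Qed.

Lemma fin_supp_delta (a : R) : fin_supp (delta a).
Proof.
  exists (a :: nil). intros q dq. left.
  destruct (Req_dec_T q a) as [-> | qa]; [reflexivity | rewrite delta_other in dq; congruence].
Qed.

Lemma fin_supp_add (f g : R -> R) : fin_supp f -> fin_supp g -> fin_supp (fun q => f q + g q).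
Proof.
  intros [l1 s1] [l2 s2]. exists (l1 ++ l2). intros q fgq. apply in_or_app.
  destruct (Req_dec_T (f q) 0) as [fq | fq]; [right; apply s2; lra | left; apply s1, fq].
Qed.

Lemma fin_supp_scale (a : R) (f : R -> R) : fin_supp f -> fin_supp (fun q => a * f q).
Proof. apply fin_supp_weaken. intros q afq fq. apply afq. rewrite fq. ring. Qed.

Lemma fin_supp_shift (s : R) (f : R -> R) : fin_supp f -> fin_supp (fun q => f (q + s)).
Proof.
  intros [l supp]. exists (map (fun q => q - s) l). intros q fq.
  replace q with ((fun q => q - s) (q + s)) by (simpl; ring).
  apply (in_map (fun q => q - s)), supp, fq.
Qed.

Lemma fin_supp_succ (f w : R -> R) : fin_supp w ->
  (forall q, w q = 0 -> w (q + 1) = 0 -> f q = 0) -> fin_supp f.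
Proof.
  intros [l supp] fw. exists (l ++ map (fun q => q - 1) l). intros q fq. apply in_or_app.
  destruct (Req_dec_T (w q) 0) as [wq | wq]; [right | left; apply supp, wq].
  destruct (Req_dec_T (w (q + 1)) 0) as [wq1 | wq1]; [exfalso; apply fq, fw; assumption |].
  replace q with ((fun q => q - 1) (q + 1)) by (simpl; ring).
  apply (in_map (fun q => q - 1)), supp, wq1.
Qed.

Lemma fin_supp_lead_tail (f : R -> R) : fin_supp f -> fin_supp (lead_tail f).
Proof.
  intro Ff. apply (fin_supp_weaken (fun q => / lead_coef f * f (q + deg f))).
  - intros q tq z. apply tq. unfold lead_tail. destruct (Rlt_dec q 0); [| reflexivity].
    unfold Rdiv. rewrite Rmult_comm. exact z.
  - apply fin_supp_scale, fin_supp_shift, Ff.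
Qed.

Lemma fin_supp_lead_form (d c : R) (y : R -> R) : fin_supp y -> fin_supp (lead_form d c y).
Proof.
  intro Fy. apply fin_supp_scale, fin_supp_add; [apply fin_supp_delta |].
  exact (fin_supp_shift (- d) y Fy).
Qed.

Lemma fin_supp_is_deg (f : R -> R) (q0 : R) : fin_supp f -> f q0 <> 0 -> exists e, is_deg f e.
Proof.
  intros [l supp]. revert f q0 supp. induction l as [| a l IH]; intros f q0 supp fq0.
  - destruct (supp q0 fq0).
  - destruct (classic (exists q1, a < q1 /\ f q1 <> 0)) as [[q1 [aq1 fq1]] | none].
    + set (g q := if Rle_dec q a then 0 else f q).
      assert (above_a : forall q, g q <> 0 -> a < q /\ f q <> 0)
        by (intros q; unfold g; destruct (Rle_dec q a); [congruence | split; [lra | exact H]]).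
      destruct (IH g q1) as [e [ge Ag]].
      * intros q gq. destruct (above_a q gq) as [aq fq].
        destruct (supp q fq) as [<- | ql]; [lra | exact ql].
      * unfold g. destruct (Rle_dec q1 a); [lra | exact fq1].
      * destruct (above_a e ge) as [ae fe]. exists e. split; [exact fe |].
        intros q eq. pose proof (Ag q eq) as gq. unfold g in gq.
        destruct (Rle_dec q a); [lra | exact gq].
    + assert (Af : vanish_above a f)
        by (intros q aq; apply NNPP; intro fq; apply none; exists q; split; assumption).
      destruct (Req_dec_T (f a) 0) as [fa | fa].
      * apply (IH f q0); [| exact fq0]. intros q fq.
        destruct (supp q fq) as [<- | ql]; [congruence | exact ql].
      * exists a. split; assumption.
Qed.

Lemma fin_supp_sign (f : R -> R) :
  fin_supp f -> lead_pos f \/ (forall q, f q = 0) \/ lead_pos (fun q => - f q).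
Proof.
  intro Ff. destruct (classic (exists q0, f q0 <> 0)) as [[q0 fq0] | zero].
  - destruct (fin_supp_is_deg f q0 Ff fq0) as [e [fe above]].
    destruct (Rlt_le_dec 0 (f e)) as [pos | neg].
    + left. exists e. split; assumption.
    + right; right. exists e. split; [lra |]. intros q eq. rewrite above by exact eq. ring.
  - right; left. intro q. apply NNPP. intro fq. apply zero. exists q. exact fq.
Qed.

(** * Cubic shears and the signed square *)

(* Not a square: the defect in [unscramble_scramble_add_below_deg] would then be
   bilinear and cancel in [one_distrib_deg0_tail]. *)
Definition cube (x : R) : R := x * x * x.

Section Shear.

Variables (s : R) (P : R -> bool).

Definition shear (w : R -> R) (p : R) : R :=
  if P p then w p + s * cube (w (p + 1)) else w p.

Lemma shear_agree (U : R -> Prop) (w w' : R -> R) :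
  (forall q, U q -> U (q + 1)) -> (forall q, U q -> w q = w' q) ->
  forall q, U q -> shear w q = shear w' q.
Proof. intros U_succ E q Uq. unfold shear. rewrite (E q), (E (q + 1)) by auto. reflexivity. Qed.

Lemma shear_zero : shear (fun _ => 0) = fun _ => 0.
Proof.
  apply functional_extensionality. intro p. unfold shear, cube.
  destruct (P p); ring.
Qed.

Lemma shear_top_diff (e : R) (w w' : R -> R) :
  (forall q, e < q -> w q = w' q) -> shear w' e - shear w e = w' e - w e.
Proof. intro E. unfold shear. rewrite (E (e + 1)) by lra. destruct (P e); ring. Qed.

Lemma fin_supp_shear (w : R -> R) : fin_supp w -> fin_supp (shear w).
Proof.
  intro Fw. apply (fin_supp_succ _ w Fw). intros q wq wq1.
  unfold shear, cube. rewrite wq, wq1. destruct (P q); ring.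
Qed.

End Shear.

Lemma shear_cancel (s t : R) (P : R -> bool) (w : R -> R) :
  (forall p, P p = true -> P (p + 1) = false) -> s + t = 0 ->
  shear t P (shear s P w) = w.
Proof.
  intros P_alt st. apply functional_extensionality. intro p. unfold shear.
  destruct (P p) eqn:Pp; [rewrite (P_alt p Pp) | reflexivity].
  replace t with (- s) by lra. ring.
Qed.

(* With complementary [P] and [Q], [shear2 s P Q w p] is [w p + s * cube (w (p + 1))]
   up to terms in [w (p + 2)]; unlike that map, it has an explicit inverse. *)
Definition shear2 (s : R) (P Q : R -> bool) (w : R -> R) : R -> R := shear s P (shear s Q w).

Section Shear2.

Variables (s : R) (P Q : R -> bool).

Lemma shear2_agree (U : R -> Prop) (w w' : R -> R) :
  (forall q, U q -> U (q + 1)) -> (forall q, U q -> w q = w' q) ->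
  forall q, U q -> shear2 s P Q w q = shear2 s P Q w' q.
Proof. intros U_succ E. apply shear_agree; [exact U_succ |]. apply shear_agree; assumption. Qed.

Lemma shear2_zero : shear2 s P Q (fun _ => 0) = fun _ => 0.
Proof. unfold shear2. rewrite !shear_zero. reflexivity. Qed.

Lemma shear2_top_diff (e : R) (w w' : R -> R) :
  (forall q, e < q -> w q = w' q) -> shear2 s P Q w' e - shear2 s P Q w e = w' e - w e.
Proof.
  intro E. unfold shear2. rewrite (shear_top_diff s P e); [apply shear_top_diff, E |].
  apply (shear_agree s Q (fun q => e < q)); [intros; lra | exact E].
Qed.

Lemma fin_supp_shear2 (w : R -> R) : fin_supp w -> fin_supp (shear2 s P Q w).
Proof. intro Fw. apply fin_supp_shear, fin_supp_shear, Fw. Qed.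

Lemma shear2_vanish_above (e : R) (w : R -> R) :
  vanish_above e w -> vanish_above e (shear2 s P Q w).
Proof.
  intros Aw q eq. transitivity (shear2 s P Q (fun _ => 0) q); [| rewrite shear2_zero; reflexivity].
  apply (shear2_agree (fun q => e < q)); [intros; lra | exact Aw | exact eq].
Qed.

Lemma neg_supp_shear2 (w : R -> R) : neg_supp w -> neg_supp (shear2 s P Q w).
Proof.
  intros Nw q q0. transitivity (shear2 s P Q (fun _ => 0) q); [| rewrite shear2_zero; reflexivity].
  apply (shear2_agree (fun q => 0 <= q)); [intros; lra | exact Nw | exact q0].
Qed.

Lemma shear2_at_deg (e : R) (w : R -> R) : vanish_above e w -> shear2 s P Q w e = w e.
Proof.
  intro Aw. pose proof (shear2_top_diff e (fun _ => 0) w (fun q eq => eq_sym (Aw q eq))) as D.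
  rewrite shear2_zero in D. lra.
Qed.

Lemma shear2_below_deg (e : R) (w : R -> R) :
  (forall p, Q p = negb (P p)) -> vanish_above e w ->
  shear2 s P Q w (e - 1) = w (e - 1) + s * cube (w e).
Proof.
  intros QP Aw. unfold shear2, shear. replace (e - 1 + 1) with e by ring.
  rewrite (Aw (e + 1)), !QP by lra. unfold cube. destruct (P e), (P (e - 1)); simpl; ring.
Qed.

Lemma shear2_neg_supp_at_minus_one (w : R -> R) :
  (forall p, Q p = negb (P p)) -> neg_supp w -> shear2 s P Q w (- 1) = w (- 1).
Proof.
  intros QP Nw. replace (- 1) with (0 - 1) by ring.
  rewrite shear2_below_deg, (Nw 0) by (assumption || lra || (intros q q0; apply Nw; lra)).
  unfold cube. ring.
Qed.

Lemma lead_pos_shear2_diff (w w' : R -> R) : lead_pos (fun q => w' q - w q) ->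
  lead_pos (fun q => shear2 s P Q w' q - shear2 s P Q w q).
Proof.
  intros [e [pos above]].
  assert (E : forall q, e < q -> w q = w' q) by (intros q eq; specialize (above q eq); lra).
  exists e. rewrite (shear2_top_diff e w w' E). split; [exact pos |].
  intros q eq. rewrite (shear2_agree (fun q => e < q) w w') by (intros; lra || auto). ring.
Qed.

End Shear2.

Definition parity (p : R) : bool := Z.even (up p).

Definition coparity (p : R) : bool := negb (parity p).

Lemma parity_succ (p : R) : parity (p + 1) = negb (parity p).
Proof.
  unfold parity. replace (up (p + 1)) with (Z.succ (up p)).
  - rewrite Z.even_succ, <- Z.negb_even. reflexivity.
  - apply tech_up; rewrite succ_IZR; destruct (archimed p); lra.
Qed.

Lemma parity_alt (p : R) : parity p = true -> parity (p + 1) = false.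
Proof. intro E. rewrite parity_succ, E. reflexivity. Qed.

Lemma coparity_alt (p : R) : coparity p = true -> coparity (p + 1) = false.
Proof. unfold coparity. rewrite parity_succ. destruct (parity p); auto. Qed.

Lemma coparity_negb (p : R) : coparity p = negb (parity p).
Proof. reflexivity. Qed.

Lemma parity_negb (p : R) : parity p = negb (coparity p).
Proof. unfold coparity. rewrite Bool.negb_involutive. reflexivity. Qed.

Notation scramble := (shear2 1 parity coparity).
Notation unscramble := (shear2 (- 1) coparity parity).

Lemma unscramble_scramble (w : R -> R) : unscramble (scramble w) = w.
Proof.
  unfold shear2. rewrite (shear_cancel 1 (- 1) parity), (shear_cancel 1 (- 1) coparity);
    first [reflexivity | exact parity_alt | exact coparity_alt | lra].
Qed.

Lemma scramble_unscramble (w : R -> R) : scramble (unscramble w) = w.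
Proof.
  unfold shear2. rewrite (shear_cancel (- 1) 1 coparity), (shear_cancel (- 1) 1 parity);
    first [reflexivity | exact parity_alt | exact coparity_alt | lra].
Qed.

Lemma scramble_at_minus_one (w : R -> R) : neg_supp w -> scramble w (- 1) = w (- 1).
Proof. apply shear2_neg_supp_at_minus_one, coparity_negb. Qed.

Lemma unscramble_at_minus_one (w : R -> R) : neg_supp w -> unscramble w (- 1) = w (- 1).
Proof. apply shear2_neg_supp_at_minus_one, parity_negb. Qed.

Lemma unscramble_scramble_add_below_deg (e : R) (y1 y2 : R -> R) :
  vanish_above e y1 -> vanish_above e y2 ->
  unscramble (fun q => scramble y1 q + scramble y2 q) (e - 1)
  = y1 (e - 1) + y2 (e - 1) + cube (y1 e) + cube (y2 e) - cube (y1 e + y2 e).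
Proof.
  intros A1 A2.
  assert (A : vanish_above e (fun q => scramble y1 q + scramble y2 q)).
  { intros q eq. rewrite (shear2_vanish_above _ _ _ e y1 A1 q eq),
      (shear2_vanish_above _ _ _ e y2 A2 q eq). ring. }
  rewrite (shear2_below_deg _ _ _ e) by (exact parity_negb || exact A).
  rewrite !(shear2_below_deg _ _ _ e y1), !(shear2_below_deg _ _ _ e y2),
          !(shear2_at_deg _ _ _ e) by (exact coparity_negb || assumption).
  ring.
Qed.

Lemma neg_supp_scramble_add (y1 y2 : R -> R) (k : R) : neg_supp y1 -> neg_supp y2 ->
  neg_supp (fun q => scramble y1 q + scramble y2 q + k * delta (- 1) q).
Proof.
  intros N1 N2 q q0.
  rewrite (neg_supp_shear2 _ _ _ y1 N1 q q0), (neg_supp_shear2 _ _ _ y2 N2 q q0), delta_other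
    by lra.
  ring.
Qed.

(* Degrees of positive elements add through [ssq], so the square of an element of
   degree [d <> 0] has degree [sqrt 2 * d], which is neither [d] nor [2 * d]. *)
Definition ssq (x : R) : R := x * Rabs x.

Definition ssq_inv (u : R) : R := if Rle_dec 0 u then sqrt u else - sqrt (- u).

Lemma ssq_0 : ssq 0 = 0.
Proof. unfold ssq. ring. Qed.

Lemma ssq_lt (x y : R) : x < y -> ssq x < ssq y.
Proof.
  intro xy. unfold ssq, Rabs. destruct (Rcase_abs x), (Rcase_abs y); nra.
Qed.

Lemma ssq_inv_ssq (x : R) : ssq_inv (ssq x) = x.
Proof.
  unfold ssq_inv, ssq, Rabs. destruct (Rcase_abs x); destruct (Rle_dec 0 _).
  - nra.
  - replace (- (x * - x)) with (- x * - x) by ring. rewrite sqrt_square by lra. ring.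
  - apply sqrt_square. lra.
  - nra.
Qed.

Lemma ssq_inv_0 : ssq_inv 0 = 0.
Proof. rewrite <- ssq_0 at 1. apply ssq_inv_ssq. Qed.

Lemma ssq_ssq_inv (u : R) : ssq (ssq_inv u) = u.
Proof.
  unfold ssq_inv, ssq. destruct (Rle_dec 0 u).
  - rewrite Rabs_pos_eq by apply sqrt_pos. apply sqrt_sqrt. lra.
  - rewrite Rabs_Ropp, Rabs_pos_eq by apply sqrt_pos.
    rewrite Ropp_mult_distr_l_reverse, sqrt_sqrt by lra. ring.
Qed.

Lemma ssq_inv_lt (u v : R) : u < v -> ssq_inv u < ssq_inv v.
Proof.
  intro uv. destruct (Rlt_le_dec (ssq_inv u) (ssq_inv v)) as [lt | [gt | eq]]; [exact lt | |].
  - apply ssq_lt in gt. rewrite !ssq_ssq_inv in gt. lra.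
  - apply (f_equal ssq) in eq. rewrite !ssq_ssq_inv in eq. lra.
Qed.

Lemma ssq_inv_double (d : R) : ssq_inv (ssq d + ssq d) = sqrt 2 * d.
Proof.
  rewrite <- (ssq_inv_ssq (sqrt 2 * d)). f_equal. unfold ssq.
  rewrite Rabs_mult, (Rabs_pos_eq (sqrt 2)) by apply sqrt_pos.
  replace (sqrt 2 * d * (sqrt 2 * Rabs d)) with (sqrt 2 * sqrt 2 * (d * Rabs d)) by ring.
  rewrite sqrt_sqrt by lra. ring.
Qed.

Lemma sqrt2_bounds : 1 < sqrt 2 < 2.
Proof.
  pose proof (sqrt_sqrt 2 ltac:(lra)). pose proof (sqrt_pos 2). split; nra.
Qed.

(** * The value group *)

Record vgroup : Type := VG { vdeg : R; vlog : R; vtail : R -> R }.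

Definition vg_add (a b : vgroup) : vgroup :=
  VG (vdeg a + vdeg b) (vlog a + vlog b) (fun q => vtail a q + vtail b q).

Definition vg_scale (k : R) (a : vgroup) : vgroup :=
  VG (k * vdeg a) (k * vlog a) (fun q => k * vtail a q).

Definition vg_lt (a b : vgroup) : Prop :=
  vdeg a < vdeg b \/
  (vdeg a = vdeg b /\
   (vlog a < vlog b \/ (vlog a = vlog b /\ lead_pos (fun q => vtail b q - vtail a q)))).

Definition vg_good (a : vgroup) : Prop := neg_supp (vtail a) /\ fin_supp (vtail a).

Lemma vg_ext (a b : vgroup) :
  vdeg a = vdeg b -> vlog a = vlog b -> (forall q, vtail a q = vtail b q) -> a = b.
Proof.
  destruct a, b; simpl. intros -> -> E. f_equal. apply functional_extensionality, E.
Qed.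

Lemma vg_lt_add (a b c : vgroup) : vg_lt a b -> vg_lt (vg_add a c) (vg_add b c).
Proof.
  unfold vg_lt, vg_add; simpl. intros [D | [D [L | [L T]]]].
  - left. lra.
  - right. split; [lra | left; lra].
  - right. split; [lra | right; split; [lra |]].
    apply (lead_pos_ext (fun q => vtail b q - vtail a q)); [intro; ring | exact T].
Qed.

Lemma vg_good_add (a b : vgroup) : vg_good a -> vg_good b -> vg_good (vg_add a b).
Proof.
  intros [Na Fa] [Nb Fb]. split; simpl.
  - intros q q0. rewrite Na, Nb by exact q0. ring.
  - apply fin_supp_add; assumption.
Qed.

Lemma vg_good_scale (k : R) (a : vgroup) : vg_good a -> vg_good (vg_scale k a).
Proof.
  intros [Na Fa]. split; simpl.
  - intros q q0. rewrite Na by exact q0. ring.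
  - apply fin_supp_scale, Fa.
Qed.

Section Encoding.

Variable F : R -> Prop.
Hypothesis HF : is_subfield F.

Definition flag (c : R) : R := if excluded_middle_informative (F c) then 0 else 1.

Lemma flag_cases (c : R) : flag c = 0 \/ flag c = 1.
Proof. unfold flag. destruct (excluded_middle_informative (F c)); auto. Qed.

Lemma flag_in (c : R) : F c -> flag c = 0.
Proof. intro Fc. unfold flag. destruct (excluded_middle_informative (F c)); tauto. Qed.

Lemma flag_out (c : R) : ~ F c -> flag c = 1.
Proof. intro Fc. unfold flag. destruct (excluded_middle_informative (F c)); tauto. Qed.

Lemma flag_mul (a c : R) : F a -> a <> 0 -> flag (a * c) = flag c.
Proof.
  intros Fa a0. assert (E : F (a * c) <-> F c).
  { split; intro H; [| apply (sf_mul F HF); assumption].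
    replace c with (/ a * (a * c)) by (field; exact a0).
    apply (sf_mul F HF); [apply (sf_inv F HF) |]; assumption. }
  destruct (classic (F c)) as [Fc | Fc].
  - rewrite !flag_in; tauto.
  - rewrite !flag_out; tauto.
Qed.

(* [encode] is an order isomorphism from the positive elements onto the [vg_good]
   part of [vgroup]; the flag at exponent [-1] records whether the leading
   coefficient lies in [F]. *)
Definition encode (f : R -> R) : vgroup :=
  VG (ssq (deg f)) (ln (lead_coef f))
     (fun q => scramble (lead_tail f) q + flag (lead_coef f) * delta (- 1) q).

Definition decode_tail (a : vgroup) : R -> R :=
  unscramble (fun q => vtail a q - flag (exp (vlog a)) * delta (- 1) q).

Definition decode (a : vgroup) : R -> R :=
  lead_form (ssq_inv (vdeg a)) (exp (vlog a)) (decode_tail a).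

Lemma encode_lead_form (d c : R) (y : R -> R) : 0 < c -> neg_supp y ->
  encode (lead_form d c y) = VG (ssq d) (ln c) (fun q => scramble y q + flag c * delta (- 1) q).
Proof.
  intros c0 Ny. unfold encode.
  rewrite deg_lead_form, lead_coef_lead_form, lead_tail_lead_form by (lra || exact Ny).
  reflexivity.
Qed.

Lemma neg_supp_decode_tail (a : vgroup) : vg_good a -> neg_supp (decode_tail a).
Proof.
  intros [Na _]. apply neg_supp_shear2. intros q q0.
  rewrite Na, delta_other by lra. ring.
Qed.

Lemma fin_supp_decode_tail (a : vgroup) : vg_good a -> fin_supp (decode_tail a).
Proof.
  intros [_ Fa]. apply fin_supp_shear2.
  apply (fin_supp_weaken (fun q => vtail a q + - flag (exp (vlog a)) * delta (- 1) q)).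
  - intros q h z. apply h. rewrite <- z. ring.
  - apply fin_supp_add; [exact Fa | apply fin_supp_scale, fin_supp_delta].
Qed.

Lemma decode_encode (f : R -> R) : lead_pos f -> decode (encode f) = f.
Proof.
  intro Pf. destruct (lead_pos_deg f Pf) as [_ c0].
  unfold decode, decode_tail, encode; simpl. rewrite ssq_inv_ssq, exp_ln by exact c0.
  replace (fun q => scramble (lead_tail f) q + flag (lead_coef f) * delta (- 1) q
                    - flag (lead_coef f) * delta (- 1) q) with (scramble (lead_tail f))
    by (apply functional_extensionality; intro; ring).
  rewrite unscramble_scramble. apply lead_form_decomp, Pf.
Qed.

Lemma encode_decode (a : vgroup) : vg_good a -> encode (decode a) = a.
Proof.
  intro Ga. unfold decode.
  rewrite encode_lead_form by (apply exp_pos || apply neg_supp_decode_tail, Ga).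
  apply vg_ext; simpl; [apply ssq_ssq_inv | apply ln_exp |].
  intro q. unfold decode_tail. rewrite scramble_unscramble. ring.
Qed.

Lemma lead_pos_decode (a : vgroup) : vg_good a -> lead_pos (decode a).
Proof. intro Ga. apply lead_pos_lead_form; [apply exp_pos | apply neg_supp_decode_tail, Ga]. Qed.

Lemma fin_supp_decode (a : vgroup) : vg_good a -> fin_supp (decode a).
Proof. intro Ga. apply fin_supp_lead_form, fin_supp_decode_tail, Ga. Qed.

Lemma vg_good_encode (f : R -> R) : lead_pos f -> fin_supp f -> vg_good (encode f).
Proof.
  intros Pf Ff. split; simpl.
  - intros q q0. rewrite (neg_supp_shear2 _ _ _ _ (neg_supp_lead_tail f)), delta_other by lra. ring.
  - apply fin_supp_add; [apply fin_supp_shear2, fin_supp_lead_tail, Ff |].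
    apply fin_supp_scale, fin_supp_delta.
Qed.

Lemma encode_lt (f g : R -> R) :
  lead_pos f -> lead_pos g -> lead_pos (fun q => g q - f q) -> vg_lt (encode f) (encode g).
Proof.
  intros Pf Pg Pgf.
  destruct (lead_pos_deg f Pf) as [[_ Af] cf], (lead_pos_deg g Pg) as [[_ Ag] cg].
  unfold vg_lt, encode; simpl.
  destruct (Rtotal_order (deg f) (deg g)) as [dfg | [dfg | dfg]].
  - left. apply ssq_lt, dfg.
  - right. split; [rewrite dfg; reflexivity |].
    assert (top : 0 <= g (deg g) - f (deg f)).
    { rewrite <- dfg. apply (lead_pos_nonneg_at _ (deg f) Pgf).
      intros q dq. rewrite Af, Ag by lra. ring. }
    change (0 <= lead_coef g - lead_coef f) in top.
    destruct (Rle_lt_or_eq_dec (lead_coef f) (lead_coef g)) as [cfg | cfg]; [lra | |].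
    { left. apply ln_increasing; assumption. }
    right. split; [rewrite cfg; reflexivity |].
    rewrite <- (lead_form_decomp f Pf), <- (lead_form_decomp g Pg), dfg, cfg in Pgf.
    apply lead_pos_lead_form_diff, (lead_pos_shear2_diff 1 parity coparity) in Pgf; [| exact cg].
    rewrite cfg. refine (lead_pos_ext _ _ _ Pgf). intro; ring.
  - exfalso. assert (top : 0 <= g (deg f) - f (deg f)).
    { apply (lead_pos_nonneg_at _ (deg f) Pgf). intros q dq. rewrite Af, Ag by lra. ring. }
    rewrite Ag in top by exact dfg. unfold lead_coef in cf. lra.
Qed.

Lemma decode_lt (a b : vgroup) : vg_good a -> vg_good b -> vg_lt a b ->
  lead_pos (fun q => decode b q - decode a q).
Proof.
  intros Ga Gb ab.
  pose proof (neg_supp_decode_tail a Ga) as Na. pose proof (neg_supp_decode_tail b Gb) as Nb.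
  pose proof (exp_pos (vlog b)) as eb. unfold decode.
  destruct ab as [D | [D [L | [L T]]]].
  - apply ssq_inv_lt in D. apply (lead_pos_sub_at _ _ (ssq_inv (vdeg b))).
    + rewrite lead_form_at_deg, vanish_above_lead_form by assumption. exact eb.
    + intros q bq. apply vanish_above_lead_form; [exact Na | lra].
    + apply vanish_above_lead_form, Nb.
  - rewrite D. apply (lead_pos_sub_at _ _ (ssq_inv (vdeg b))).
    + rewrite !lead_form_at_deg by assumption. apply exp_increasing, L.
    + apply vanish_above_lead_form, Na.
    + apply vanish_above_lead_form, Nb.
  - rewrite D, L. apply lead_pos_lead_form_diff; [exact eb |].
    unfold decode_tail. rewrite L. apply lead_pos_shear2_diff.
    refine (lead_pos_ext _ _ _ T). intro; ring.
Qed.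

Definition pmul (f g : R -> R) : R -> R := decode (vg_add (encode f) (encode g)).

Lemma pmul_lead_form (d1 c1 d2 c2 : R) (y1 y2 : R -> R) :
  0 < c1 -> 0 < c2 -> neg_supp y1 -> neg_supp y2 ->
  pmul (lead_form d1 c1 y1) (lead_form d2 c2 y2) =
  lead_form (ssq_inv (ssq d1 + ssq d2)) (c1 * c2)
    (unscramble (fun q => scramble y1 q + scramble y2 q
                          + (flag c1 + flag c2 - flag (c1 * c2)) * delta (- 1) q)).
Proof.
  intros c1_pos c2_pos N1 N2. unfold pmul. rewrite !encode_lead_form by assumption.
  unfold decode, decode_tail, vg_add; simpl. rewrite exp_plus, !exp_ln by assumption.
  do 2 f_equal. apply functional_extensionality. intro; ring.
Qed.

Section Positive.

Variables f g : R -> R.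
Hypotheses (Pf : lead_pos f) (Pg : lead_pos g) (Ff : fin_supp f) (Fg : fin_supp g).

Lemma vg_good_encode_add : vg_good (vg_add (encode f) (encode g)).
Proof. apply vg_good_add; apply vg_good_encode; assumption. Qed.

Lemma lead_pos_pmul : lead_pos (pmul f g).
Proof. apply lead_pos_decode, vg_good_encode_add. Qed.

Lemma fin_supp_pmul : fin_supp (pmul f g).
Proof. apply fin_supp_decode, vg_good_encode_add. Qed.

End Positive.

Lemma pmul_comm (f g : R -> R) : pmul f g = pmul g f.
Proof. unfold pmul. f_equal. apply vg_ext; simpl; [ring | ring | intro; ring]. Qed.

Lemma pmul_assoc (f g h : R -> R) :
  lead_pos f -> lead_pos g -> lead_pos h -> fin_supp f -> fin_supp g -> fin_supp h ->
  pmul f (pmul g h) = pmul (pmul f g) h.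
Proof.
  intros Pf Pg Ph Ff Fg Fh. unfold pmul.
  rewrite !encode_decode by (apply vg_good_encode_add; assumption).
  f_equal. apply vg_ext; simpl; [ring | ring | intro; ring].
Qed.

Lemma pmul_cst (a : R) (g : R -> R) :
  F a -> 0 < a -> lead_pos g -> pmul (fun q => a * delta 0 q) g = fun q => a * g q.
Proof.
  intros Fa a0 Pg. destruct (lead_pos_deg g Pg) as [_ cg].
  assert (Ea : (fun q => a * delta 0 q) = lead_form 0 a (fun _ => 0)).
  { apply functional_extensionality. intro q. unfold lead_form. ring. }
  rewrite Ea, <- (lead_form_decomp g Pg) at 1.
  rewrite pmul_lead_form by (try lra; try exact (neg_supp_lead_tail g); intros q _; reflexivity).
  rewrite ssq_0, Rplus_0_l, ssq_inv_ssq, shear2_zero, flag_in, flag_mul by (lra || exact Fa).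
  replace (fun q => 0 + scramble (lead_tail g) q + (0 + flag (lead_coef g) - flag (lead_coef g))
                                                  * delta (- 1) q)
    with (scramble (lead_tail g)) by (apply functional_extensionality; intro; ring).
  rewrite unscramble_scramble. apply functional_extensionality. intro q.
  transitivity (a * lead_form (deg g) (lead_coef g) (lead_tail g) q); [unfold lead_form; ring |].
  rewrite lead_form_decomp by exact Pg. reflexivity.
Qed.

Lemma decode_zero : decode (VG 0 0 (fun _ => 0)) = delta 0.
Proof.
  unfold decode, decode_tail; simpl.
  rewrite ssq_inv_0, exp_0, flag_in by exact (sf_1 F HF).
  replace (fun _ : R => 0 - 0 * delta (- 1) _) with (fun _ : R => 0)
    by (apply functional_extensionality; intro; ring).
  rewrite shear2_zero. apply functional_extensionality. intro q. unfold lead_form. ring.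
Qed.

End Encoding.

(** * The scrambled model *)

Section Model.

Variable F : R -> Prop.
Hypothesis HF : is_subfield F.

Definition is_Fconst (f : R -> R) : Prop := exists a, F a /\ forall q, f q = a * delta 0 q.

(* The axioms only constrain products of two positive elements and products by
   constants; all other products are set to [0]. *)
Definition mul_fun (f g : R -> R) : R -> R :=
  if excluded_middle_informative (lead_pos f /\ lead_pos g) then pmul F f g
  else if excluded_middle_informative (is_Fconst f) then fun q => f 0 * g q
  else fun _ => 0.

Lemma mul_fun_pos (f g : R -> R) : lead_pos f -> lead_pos g -> mul_fun f g = pmul F f g.
Proof.
  intros Pf Pg. unfold mul_fun.
  destruct (excluded_middle_informative _); [reflexivity | tauto].
Qed.

Lemma mul_fun_cst (a : R) (g : R -> R) :
  F a -> mul_fun (fun q => a * delta 0 q) g = fun q => a * g q.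
Proof.
  intro Fa. unfold mul_fun. destruct (excluded_middle_informative _) as [[[e [pe _]] Pg] | _].
  - apply (pmul_cst F HF); [exact Fa | | exact Pg].
    destruct (Req_dec_T e 0) as [-> | e0];
      [rewrite delta_same in pe | rewrite delta_other in pe by exact e0]; lra.
  - destruct (excluded_middle_informative _) as [_ | not_cst].
    + rewrite delta_same, Rmult_1_r. reflexivity.
    + exfalso. apply not_cst. exists a. split; [exact Fa | reflexivity].
Qed.

Lemma mul_fun_other (f g : R -> R) : ~ lead_pos f -> ~ is_Fconst f -> mul_fun f g = fun _ => 0.
Proof.
  intros Pf Cf. unfold mul_fun.
  destruct (excluded_middle_informative _) as [[? _] | _]; [contradiction |].
  destruct (excluded_middle_informative _); [contradiction | reflexivity].
Qed.

Lemma fin_supp_mul_fun (f g : R -> R) : fin_supp f -> fin_supp g -> fin_supp (mul_fun f g).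
Proof.
  intros Ff Fg. unfold mul_fun. destruct (excluded_middle_informative _) as [[Pf Pg] | _].
  - apply (fin_supp_pmul F); assumption.
  - destruct (excluded_middle_informative _); [apply fin_supp_scale, Fg | apply fin_supp_zero].
Qed.

Definition finsum : Type := {f : R -> R | fin_supp f}.

Definition coef (x : finsum) : R -> R := proj1_sig x.

Lemma finsum_ext (x y : finsum) : (forall q, coef x q = coef y q) -> x = y.
Proof.
  destruct x as [f Ff], y as [g Fg]. unfold coef; simpl. intro E.
  assert (f = g) as <- by (apply functional_extensionality, E).
  f_equal. apply proof_irrelevance.
Qed.

Definition fs_zero : finsum := exist _ (fun _ => 0) fin_supp_zero.
Definition fs_one : finsum := exist _ (delta 0) (fin_supp_delta 0).
Definition fs_add (x y : finsum) : finsum :=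
  exist _ (fun q => coef x q + coef y q) (fin_supp_add _ _ (proj2_sig x) (proj2_sig y)).
Definition fs_opp (x : finsum) : finsum :=
  exist _ (fun q => -1 * coef x q) (fin_supp_scale (-1) _ (proj2_sig x)).
Definition fs_mul (x y : finsum) : finsum :=
  exist _ (mul_fun (coef x) (coef y)) (fin_supp_mul_fun _ _ (proj2_sig x) (proj2_sig y)).
Definition fs_cst (a : R) : finsum :=
  exist _ (fun q => a * delta 0 q) (fin_supp_scale a _ (fin_supp_delta 0)).
Definition fs_lt (x y : finsum) : Prop := lead_pos (fun q => coef y q - coef x q).

Definition scrambled_model : LStruct :=
  {| car := finsum; zeroM := fs_zero; oneM := fs_one; addM := fs_add; mulM := fs_mul;
     ltM := fs_lt; cst := fs_cst |}.

Lemma fs_pos (x : finsum) : fs_lt fs_zero x <-> lead_pos (coef x).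
Proof. split; apply lead_pos_ext; intro; simpl; ring. Qed.

Lemma coef_fs_mul_pos (x y : finsum) : fs_lt fs_zero x -> fs_lt fs_zero y ->
  coef (fs_mul x y) = pmul F (coef x) (coef y).
Proof. intros Px Py. apply mul_fun_pos; apply fs_pos; assumption. Qed.

Lemma fs_lt_total (x y : finsum) : fs_lt x y \/ x = y \/ fs_lt y x.
Proof.
  assert (Fd : fin_supp (fun q => coef y q - coef x q)).
  { apply (fin_supp_weaken (fun q => coef y q + -1 * coef x q)); [intros q h z; apply h; lra |].
    apply fin_supp_add; [exact (proj2_sig y) | apply fin_supp_scale, (proj2_sig x)]. }
  destruct (fin_supp_sign _ Fd) as [P | [Z | N]].
  - left. exact P.
  - right; left. apply finsum_ext. intro q. specialize (Z q). lra.
  - right; right. refine (lead_pos_ext _ _ _ N). intro; ring.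
Qed.

Lemma fs_pos_mul_inv (x : finsum) : fs_lt fs_zero x ->
  exists y, fs_lt fs_zero y /\ fs_mul x y = fs_one.
Proof.
  intro Px. pose proof Px as Px'. apply fs_pos in Px'.
  assert (G : vg_good (vg_scale (-1) (encode F (coef x))))
    by (apply vg_good_scale, vg_good_encode; [exact Px' | exact (proj2_sig x)]).
  set (y := exist _ _ (fin_supp_decode F _ G) : finsum).
  assert (Py : fs_lt fs_zero y) by (apply fs_pos, lead_pos_decode, G).
  exists y. split; [exact Py |]. apply finsum_ext. intro q.
  rewrite coef_fs_mul_pos by assumption. unfold pmul, y; simpl. rewrite encode_decode by exact G.
  replace (vg_add _ _) with (VG 0 0 (fun _ => 0))
    by (apply vg_ext; simpl; [ring | ring | intro; ring]).
  rewrite (decode_zero F HF). reflexivity.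
Qed.

Lemma coef_powM (y : finsum) (a : vgroup) (k : nat) : vg_good a -> coef y = decode F a ->
  coef (powM scrambled_model y k) = decode F (vg_scale (INR (S k)) a).
Proof.
  intros Ga Ey. induction k as [| k IH].
  - simpl powM. rewrite Ey. f_equal. apply vg_ext; simpl; [ring | ring | intro; ring].
  - change (mul_fun (coef y) (coef (powM scrambled_model y k))
            = decode F (vg_scale (INR (S (S k))) a)).
    assert (Gk : vg_good (vg_scale (INR (S k)) a)) by (apply vg_good_scale, Ga).
    rewrite Ey, IH, mul_fun_pos by (apply lead_pos_decode; assumption).
    unfold pmul. rewrite !encode_decode by assumption.
    f_equal. rewrite (S_INR (S k)). apply vg_ext; simpl; [ring | ring | intro; ring].
Qed.

Lemma fs_pos_divisible (k : nat) (x : finsum) : fs_lt fs_zero x ->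
  exists y, fs_lt fs_zero y /\ powM scrambled_model y k = x.
Proof.
  intro Px. apply fs_pos in Px.
  assert (G : vg_good (vg_scale (/ INR (S k)) (encode F (coef x))))
    by (apply vg_good_scale, vg_good_encode; [exact Px | exact (proj2_sig x)]).
  set (y := exist _ _ (fin_supp_decode F _ G) : finsum).
  exists y. split; [apply fs_pos, lead_pos_decode, G |].
  apply finsum_ext. intro q. rewrite (coef_powM y _ k G eq_refl).
  replace (vg_scale _ _) with (encode F (coef x));
    [rewrite decode_encode by exact Px; reflexivity |].
  pose proof (pos_INR k). rewrite S_INR.
  apply vg_ext; simpl; [field | field | intro; field]; lra.
Qed.

Lemma fs_lt_mul_pos (x y z : finsum) : fs_lt fs_zero x -> fs_lt fs_zero y -> fs_lt fs_zero z ->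
  fs_lt x y -> fs_lt (fs_mul x z) (fs_mul y z).
Proof.
  intros Px Py Pz xy. unfold fs_lt. rewrite !coef_fs_mul_pos by assumption.
  apply fs_pos in Px, Py, Pz. unfold pmul.
  apply decode_lt; try (apply vg_good_encode_add; assumption || exact (proj2_sig _)).
  apply vg_lt_add, encode_lt; assumption.
Qed.

Lemma fs_pos_mul (x y : finsum) :
  fs_lt fs_zero x -> fs_lt fs_zero y -> fs_lt fs_zero (fs_mul x y).
Proof.
  intros Px Py. apply fs_pos. rewrite coef_fs_mul_pos by assumption.
  apply fs_pos in Px, Py. apply (lead_pos_pmul F); assumption || exact (proj2_sig _).
Qed.

Lemma fs_pos_mul_assoc (x y z : finsum) :
  fs_lt fs_zero x -> fs_lt fs_zero y -> fs_lt fs_zero z ->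
  fs_mul x (fs_mul y z) = fs_mul (fs_mul x y) z.
Proof.
  intros Px Py Pz. apply finsum_ext. intro q.
  rewrite !coef_fs_mul_pos by (assumption || apply fs_pos_mul; assumption).
  apply fs_pos in Px, Py, Pz.
  rewrite (pmul_assoc F); assumption || exact (proj2_sig _) || reflexivity.
Qed.

Lemma scrambled_model_TF : model_TF F scrambled_model.
Proof.
  constructor; simpl.
  - intros. apply finsum_ext. intro; simpl; ring.
  - intros. apply finsum_ext. intro; simpl; ring.
  - intros. apply finsum_ext. intro; simpl; ring.
  - intro x. exists (fs_opp x). apply finsum_ext. intro; simpl; ring.
  - intros x L. apply not_lead_pos_zero. refine (lead_pos_ext _ _ _ L). intro; ring.
  - intros x y z L1 L2. refine (lead_pos_ext _ _ _ (lead_pos_add _ _ L1 L2)). intro; ring.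
  - exact fs_lt_total.
  - intros x y z L. refine (lead_pos_ext _ _ _ L). intro; simpl; ring.
  - apply fs_pos. apply (lead_pos_ext (fun q => 1 * delta 0 q)); [intro; simpl; ring |].
    apply lead_pos_cst. lra.
  - exact fs_pos_mul.
  - exact fs_pos_mul_assoc.
  - intros x y Px Py. apply finsum_ext. intro q.
    rewrite !coef_fs_mul_pos by assumption. rewrite (pmul_comm F). reflexivity.
  - intros x Px. apply finsum_ext. intro q. change (mul_fun (delta 0) (coef x) q = coef x q).
    replace (delta 0) with (fun q => 1 * delta 0 q)
      by (apply functional_extensionality; intro; ring).
    rewrite mul_fun_cst by exact (sf_1 F HF). ring.
  - exact fs_pos_mul_inv.
  - exact fs_lt_mul_pos.
  - exact fs_pos_divisible.
  - intros a b Fa Fb. apply finsum_ext. intro; simpl; ring.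
  - intros a b Fa Fb. apply finsum_ext. intro q. unfold fs_mul, coef; simpl.
    rewrite mul_fun_cst by exact Fa. ring.
  - intros a Fa a0. apply fs_pos, lead_pos_cst, a0.
  - intros a b x Fa Fb. apply finsum_ext. intro q. unfold fs_mul, coef; simpl.
    rewrite !mul_fun_cst by first [assumption | apply (sf_add F HF); assumption]. ring.
  - intros a x y Fa. apply finsum_ext. intro q. unfold fs_mul, coef; simpl.
    rewrite !mul_fun_cst by exact Fa. unfold coef. ring.
Qed.

End Model.

(** * Solutions of x (1 + x) = x + x x in the scrambled model *)

Section Solutions.

Variable F : R -> Prop.
Hypothesis HF : is_subfield F.

Definition pmul_one_distrib (f : R -> R) : Prop :=
  forall q, pmul F f (fun q => delta 0 q + f q) q = f q + pmul F f f q.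

Section LeadFormSolutions.

Variables (c : R) (y : R -> R).
Hypotheses (c_pos : 0 < c) (Ny : neg_supp y).

Lemma one_distrib_deg_neg (d : R) : d < 0 -> ~ pmul_one_distrib (lead_form d c y).
Proof.
  intros d_neg E. set (b := lead_form d c y) in E.
  pose proof (ssq_inv_double d) as D. pose proof sqrt2_bounds as S2.
  set (D2 := ssq_inv (ssq d + ssq d)) in *.
  assert (Ab : vanish_above d b) by (apply vanish_above_lead_form, Ny).
  assert (Nb : neg_supp b) by (intros q q0; apply Ab; lra).
  assert (Eb : (fun q => delta 0 q + b q) = lead_form 0 1 b).
  { apply functional_extensionality. intro q. unfold lead_form. rewrite Rminus_0_r. ring. }
  specialize (E D2). rewrite Eb in E. unfold b in E.
  rewrite !(pmul_lead_form F) in E by (lra || assumption).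
  rewrite ssq_0, Rplus_0_r, ssq_inv_ssq, Rmult_1_r, (flag_in F 1 (sf_1 F HF)) in E.
  fold b D2 in E.
  replace (fun q => scramble y q + scramble b q + (flag F c + 0 - flag F c) * delta (- 1) q)
    with (fun q => scramble y q + scramble b q) in E
    by (apply functional_extensionality; intro; ring).
  assert (Y1 : unscramble (fun q => scramble y q + scramble b q) (D2 - d) = y (D2 - d)).
  { transitivity (unscramble (scramble y) (D2 - d)); [| rewrite unscramble_scramble; reflexivity].
    apply (shear2_agree _ _ _ (fun q => d < q)); [intros; lra | | nra].
    intros q dq. rewrite (shear2_vanish_above _ _ _ d b Ab q dq). ring. }
  assert (Y2 : unscramble (fun q => scramble y q + scramble y q
                 + (flag F c + flag F c - flag F (c * c)) * delta (- 1) q) 0 = 0).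
  { apply neg_supp_shear2; [| lra]. intros q q0.
    rewrite (neg_supp_shear2 _ _ _ y Ny q q0), delta_other by lra. ring. }
  assert (bD2 : b D2 = c * y (D2 - d)) by (unfold b, lead_form; rewrite delta_other by nra; ring).
  unfold lead_form in E. rewrite bD2, Y1, Rminus_diag, Y2, delta_same, delta_other in E by nra.
  nra.
Qed.

Lemma one_distrib_deg_pos (d : R) : 0 < d -> ~ pmul_one_distrib (lead_form d c y).
Proof.
  intros d_pos E. pose proof (ssq_inv_double d) as D. pose proof sqrt2_bounds as S2.
  set (y' q := y q + / c * delta (- d) q).
  assert (Ny' : neg_supp y') by (intros q q0; unfold y'; rewrite Ny, delta_other by lra; ring).
  assert (Eb : (fun q => delta 0 q + lead_form d c y q) = lead_form d c y').
  { apply functional_extensionality. intro q. unfold lead_form, y'.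
    rewrite delta_sub, Rplus_opp_l. field. lra. }
  specialize (E d). rewrite Eb, !(pmul_lead_form F) in E by assumption.
  set (D2 := ssq_inv (ssq d + ssq d)) in *.
  set (k := flag F c + flag F c - flag F (c * c)) in E.
  assert (Y : unscramble (fun q => scramble y q + scramble y' q + k * delta (- 1) q) (d - D2)
            = unscramble (fun q => scramble y q + scramble y q + k * delta (- 1) q) (d - D2)).
  { apply (shear2_agree _ _ _ (fun q => - d < q)); [intros; lra | | nra].
    intros q dq. rewrite (shear2_agree _ _ _ (fun q => - d < q) y' y);
      [reflexivity | intros; lra | | exact dq].
    intros q' dq'. unfold y'. rewrite delta_other by lra. ring. }
  unfold lead_form in E. rewrite Y, Rminus_diag, (Ny 0), delta_same, delta_other in E by nra.
  nra.
Qed.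

Section DegreeZero.

Let L := c / (1 + c).

Lemma L_one_add : L * (1 + c) = c.
Proof. unfold L. field. lra. Qed.

Lemma one_add_lead_form_deg0 :
  (fun q => delta 0 q + lead_form 0 c y q) = lead_form 0 (1 + c) (fun q => L * y q).
Proof. apply functional_extensionality. intro q. unfold lead_form, L. field. lra. Qed.

Lemma neg_supp_L : neg_supp (fun q => L * y q).
Proof. intros q q0. rewrite Ny by exact q0. ring. Qed.

Lemma one_distrib_deg0_coef : pmul_one_distrib (lead_form 0 c y) -> F c.
Proof.
  intro E. apply NNPP. intro Fc.
  assert (F1c : ~ F (1 + c)).
  { intro F1c. apply Fc. replace c with (1 + c + - 1) by ring.
    apply (sf_add F HF), (sf_opp F HF), (sf_1 F HF). exact F1c. }
  specialize (E (- 1)). rewrite one_add_lead_form_deg0, !(pmul_lead_form F) in E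
    by (lra || exact Ny || exact neg_supp_L).
  rewrite ssq_0, Rplus_0_r, ssq_inv_0, (flag_out F c Fc), (flag_out F (1 + c) F1c) in E.
  unfold lead_form in E. rewrite Rminus_0_r, delta_other in E by lra.
  rewrite !unscramble_at_minus_one, !scramble_at_minus_one, delta_same in E
    by (apply neg_supp_scramble_add || idtac; (exact Ny || exact neg_supp_L)).
  set (k1 := 1 + 1 - flag F (c * (1 + c))) in E. set (k2 := 1 + 1 - flag F (c * c)) in E.
  assert (K : (1 + c) * k1 = c * k2).
  { apply (Rmult_eq_reg_l c); [| lra].
    assert (ID : c * (1 + c) * (0 + (y (- 1) + L * y (- 1) + k1 * 1))
                 - (c * (0 + y (- 1)) + c * c * (0 + (y (- 1) + y (- 1) + k2 * 1)))
                 = c * ((1 + c) * k1) - c * (c * k2) + c * y (- 1) * (L * (1 + c) - c)) by ring.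
    rewrite L_one_add in ID. lra. }
  unfold k1, k2 in K.
  destruct (flag_cases F (c * (1 + c))) as [f1 | f1], (flag_cases F (c * c)) as [f2 | f2];
    rewrite f1, f2 in K; try lra.
  apply Fc. replace c with 1 by lra. exact (sf_1 F HF).
Qed.

Lemma one_distrib_deg0_tail :
  F c -> fin_supp y -> pmul_one_distrib (lead_form 0 c y) -> forall q, y q = 0.
Proof.
  intros Fc Fy E. apply NNPP. intro nz. apply not_all_ex_not in nz. destruct nz as [q0 yq0].
  destruct (fin_supp_is_deg y q0 Fy yq0) as [e [ye Ay]].
  assert (e_neg : e < 0) by (destruct (Rlt_le_dec e 0); [assumption | exfalso; apply ye, Ny; lra]).
  assert (F1c : F (1 + c)) by (apply (sf_add F HF); [exact (sf_1 F HF) | exact Fc]).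
  specialize (E (e - 1)). rewrite one_add_lead_form_deg0, !(pmul_lead_form F) in E
    by (lra || exact Ny || exact neg_supp_L).
  rewrite ssq_0, Rplus_0_r, ssq_inv_0, !(flag_in F) in E
    by (exact Fc || exact F1c || apply (sf_mul F HF); assumption).
  replace (fun q => scramble y q + scramble (fun q => L * y q) q + (0 + 0 - 0) * delta (- 1) q)
    with (fun q => scramble y q + scramble (fun q => L * y q) q) in E
    by (apply functional_extensionality; intro; ring).
  replace (fun q => scramble y q + scramble y q + (0 + 0 - 0) * delta (- 1) q)
    with (fun q => scramble y q + scramble y q) in E
    by (apply functional_extensionality; intro; ring).
  assert (ALy : vanish_above e (fun q => L * y q)) by (intros q eq; rewrite Ay by exact eq; ring).
  unfold lead_form in E. rewrite !Rminus_0_r, delta_other in E by lra.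
  rewrite !(unscramble_scramble_add_below_deg e) in E by assumption.
  set (u := y (e - 1)) in E. set (r := y e) in *.
  assert (ID : c * (1 + c) * (0 + (u + L * u + cube r + cube (L * r) - cube (r + L * r)))
               - (c * (0 + u) + c * c * (0 + (u + u + cube r + cube r - cube (r + r))))
               = 3 * c * c * cube r * (1 - L)
                 + (c * u - 3 * c * (1 + L) * cube r) * (L * (1 + c) - c))
    by (unfold cube; ring).
  rewrite E, L_one_add in ID. replace (c - c) with 0 in ID by ring.
  assert (L_lt_1 : L < 1) by (unfold L; apply Rmult_lt_reg_r with (1 + c); [lra |];
                              unfold Rdiv; rewrite Rmult_assoc, Rinv_l; lra).
  assert (r3 : cube r <> 0)
    by (unfold cube; repeat apply Rmult_integral_contrapositive_currified; exact ye).
  assert (3 * c * c * cube r * (1 - L) <> 0)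
    by (repeat apply Rmult_integral_contrapositive_currified; lra).
  lra.
Qed.

End DegreeZero.

Lemma pmul_one_distrib_lead_form (d : R) : fin_supp y -> pmul_one_distrib (lead_form d c y) ->
  d = 0 /\ F c /\ forall q, y q = 0.
Proof.
  intros Fy E. destruct (Rtotal_order d 0) as [d_neg | [-> | d_pos]].
  - exfalso. exact (one_distrib_deg_neg d d_neg E).
  - pose proof (one_distrib_deg0_coef E) as Fc.
    split; [reflexivity | split; [exact Fc | exact (one_distrib_deg0_tail Fc Fy E)]].
  - exfalso. exact (one_distrib_deg_pos d d_pos E).
Qed.

End LeadFormSolutions.

Lemma lead_pos_one_distrib (f : R -> R) : lead_pos f -> fin_supp f -> pmul_one_distrib f ->
  F (f 0) /\ forall q, f q = f 0 * delta 0 q.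
Proof.
  intros Pf Ff E. destruct (lead_pos_deg f Pf) as [_ cf].
  rewrite <- (lead_form_decomp f Pf) in E.
  destruct (pmul_one_distrib_lead_form _ _ cf (neg_supp_lead_tail f) _ (fin_supp_lead_tail f Ff) E)
    as [d0 [Fc y0]].
  assert (Ef : forall q, f q = lead_coef f * delta 0 q).
  { intro q. transitivity (lead_form (deg f) (lead_coef f) (lead_tail f) q).
    - rewrite lead_form_decomp by exact Pf. reflexivity.
    - unfold lead_form. rewrite y0, d0. ring. }
  rewrite Ef, delta_same, Rmult_1_r. split; [exact Fc | exact Ef].
Qed.

Lemma one_distrib_scrambled (b : finsum) : one_distrib (scrambled_model F) b ->
  F (coef b 0) /\ b = fs_cst (coef b 0).
Proof.
  intro E.
  assert (E' : forall q, mul_fun F (coef b) (fun q => delta 0 q + coef b q) q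
                         = coef b q + mul_fun F (coef b) (coef b) q)
    by (intro q; exact (f_equal (fun x => coef x q) E)).
  enough (Fb : F (coef b 0) /\ forall q, coef b q = coef b 0 * delta 0 q)
    by (split; [apply Fb | apply finsum_ext, Fb]).
  destruct (classic (lead_pos (coef b))) as [Pb | Pb].
  - assert (P1b : lead_pos (fun q => delta 0 q + coef b q)).
    { apply lead_pos_add; [| exact Pb].
      apply (lead_pos_ext (fun q => 1 * delta 0 q)); [intro; ring | apply lead_pos_cst; lra]. }
    rewrite !mul_fun_pos in E' by assumption.
    exact (lead_pos_one_distrib _ Pb (proj2_sig b) E').
  - destruct (classic (is_Fconst F (coef b))) as [[a [Fa Ha]] | Nc].
    + rewrite Ha, delta_same, Rmult_1_r. split; assumption.
    + rewrite !mul_fun_other in E' by assumption.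
      assert (b0 : forall q, coef b q = 0) by (intro q; specialize (E' q); lra).
      rewrite b0. split; [exact (sf_0 F HF) | intro q; rewrite b0; ring].
Qed.

End Solutions.

Theorem corollary10p4 (F : R -> Prop) (HF : is_subfield F)
  (Hcount : countable_set F) (n : nat) (psi : qf_formula n) :
  (exists a : Fin.t n -> R, (forall i, F (a i)) /\ sat Rstruct a psi) <->
  (forall M : LStruct, model_TF F M ->
     exists b : Fin.t n -> car M,
       sat M b psi /\
       forall i, mulM M (b i) (addM M (oneM M) (b i)) =
                 addM M (b i) (mulM M (b i) (b i))).
Proof.
  split.
  - intros [a [Fa Ha]] M HM. exists (fun i => cst M (a i)). split.
    + apply (sat_cst F M HF HM n a Fa), Ha.
    + intro i. apply (one_distrib_cst F M HF HM), Fa.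
  - intro H. destruct (H _ (scrambled_model_TF F HF)) as [b [Hb Hdistr]].
    assert (Hc : forall i, F (coef (b i) 0) /\ b i = fs_cst (coef (b i) 0))
      by (intro i; apply (one_distrib_scrambled F HF), Hdistr).
    exists (fun i => coef (b i) 0). split; [intro i; apply Hc |].
    apply (sat_cst F (scrambled_model F) HF (scrambled_model_TF F HF) n); [intro i; apply Hc |].
    replace (fun i => cst (scrambled_model F) (coef (b i) 0)) with b; [exact Hb |].
    apply functional_extensionality. intro i. apply Hc.
Qed.
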